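(* Let $\Lambda,\Gamma$ be row-finite $k$-graphs and let $p:\Lambda\to\Gamma$ be a surjective $k$-graph morphism with $r$-path lifting. If $\Lambda$ is cofinal, then $\Gamma$ is cofinal.
   Context: A $k$-graph is a countable category $\Lambda$ with a functor $d:\Lambda\to\mathbb{N}^k$ with unique factorisation. $\Lambda^n=d^{-1}(n)$, $\Lambda^0$ = vertices, $uXv=\{\lambda\in X: r(\lambda)=u, s(\lambda)=v\}$; row-finite: $v\Lambda^n$ finite. A $k$-graph morphism is a degree-preserving functor. A surjective $k$-graph morphism $p:\Lambda\to\Gamma$ has $r$-path lifting if for all $v\in\Lambda^0$ and $\lambda\in p(v)\Gamma$ there is $\lambda'\in v\Lambda$ with $p(\lambda')=\lambda$. A $k$-graph $\Lambda$ is cofinal if for all $v,w\in\Lambda^0$ there is $N\in\mathbb{N}^k$ such that $v\Lambda s(\alpha)\neq\emptyset$ for every $\alpha\in w\Lambda^N$. *)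

From Stdlib Require Import List.
From mathcomp Require Import all_boot.
Set Implicit Arguments. Unset Strict Implicit. Unset Printing Implicit Defensive.

Definition degk (k : nat) := {ffun 'I_k -> nat}.
Definition dzero (k : nat) : degk k := [ffun _ => 0].
Definition dadd (k : nat) (m n : degk k) : degk k := [ffun i => m i + n i].

(* Composition [comp l m] (= l m) is a total function but is only
   constrained when s l = r m (composable pair). *)
Record kgraph (k : nat) := KGraph {
  kvert : Type;
  kpath : Type;
  rng : kpath -> kvert;
  src : kpath -> kvert;
  idp : kvert -> kpath;
  comp : kpath -> kpath -> kpath;
  deg : kpath -> degk k;
  rng_idp : forall v, rng (idp v) = v;
  src_idp : forall v, src (idp v) = v;
  rng_comp : forall l m, src l = rng m -> rng (comp l m) = rng l;
  src_comp : forall l m, src l = rng m -> src (comp l m) = src m;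
  comp_idl : forall l, comp (idp (rng l)) l = l;
  comp_idr : forall l, comp l (idp (src l)) = l;
  compA : forall l m n, src l = rng m -> src m = rng n ->
            comp l (comp m n) = comp (comp l m) n;
  deg_idp : forall v, deg (idp v) = dzero k;
  deg_comp : forall l m, src l = rng m -> deg (comp l m) = dadd (deg l) (deg m);
  factor : forall l (m n : degk k), deg l = dadd m n ->
             exists mu nu, [/\ src mu = rng nu, deg mu = m, deg nu = n
                              & l = comp mu nu];
  factor_uniq : forall mu nu mu' nu',
             src mu = rng nu -> src mu' = rng nu' ->
             deg mu = deg mu' -> deg nu = deg nu' ->
             comp mu nu = comp mu' nu' -> mu = mu' /\ nu = nu';
  vert_countable : exists f : kvert -> nat, injective f;
  path_countable : exists f : kpath -> nat, injective f
}.

Arguments rng {k} _ _.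
Arguments src {k} _ _.
Arguments idp {k} _ _.
Arguments comp {k} _ _ _.
Arguments deg {k} _ _.

Definition row_finite k (L : kgraph k) : Prop :=
  forall (v : kvert L) (n : degk k),
    exists s : list (kpath L),
      forall l, rng L l = v -> deg L l = n -> In l s.

Definition kgraph_morphism k (L G : kgraph k)
    (pv : kvert L -> kvert G) (pp : kpath L -> kpath G) : Prop :=
  [/\ forall l, rng G (pp l) = pv (rng L l),
      forall l, src G (pp l) = pv (src L l),
      forall v, pp (idp L v) = idp G (pv v),
      forall l m, src L l = rng L m -> pp (comp L l m) = comp G (pp l) (pp m)
    & forall l, deg G (pp l) = deg L l].

(* surjective morphism: surjective on paths (hence also on vertices) *)
Definition surjective_morphism k (L G : kgraph k)
    (pv : kvert L -> kvert G) (pp : kpath L -> kpath G) : Prop :=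
  kgraph_morphism pv pp /\ (forall g, exists l, pp l = g).

Definition r_path_lifting k (L G : kgraph k)
    (pv : kvert L -> kvert G) (pp : kpath L -> kpath G) : Prop :=
  forall (v : kvert L) (g : kpath G), rng G g = pv v ->
    exists l, rng L l = v /\ pp l = g.

Definition cofinal k (L : kgraph k) : Prop :=
  forall v w : kvert L, exists N : degk k,
    forall a, rng L a = w -> deg L a = N ->
      exists l, rng L l = v /\ src L l = src L a.

(* Lift the vertices [v], [w] of [G] to [v'], [w'] in [L] and take the [N]
   given by cofinality of [L] for [v'], [w'].  A path [a] of degree [N] from
   [w] lifts along [r]-path lifting to a path [a'] from [w'] of degree [N];
   a path [l] from [v'] to [s a'] then maps to a path from [v] to [s a]. *)
From mathcomp Require Import all_boot.

Section Morphism.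

Variables (k : nat) (L G : kgraph k).
Variables (pv : kvert L -> kvert G) (pp : kpath L -> kpath G).

Lemma surjective_morphism_vert :
  surjective_morphism pv pp -> forall x, exists y, pv y = x.
Proof.
move=> [[pp_rng _ _ _ _] pp_surj] x.
have [l pl_id] := pp_surj (idp G x).
by exists (rng L l); rewrite -pp_rng pl_id rng_idp.
Qed.

Lemma r_path_lifting_deg :
  kgraph_morphism pv pp -> r_path_lifting pv pp ->
  forall v g, rng G g = pv v ->
    exists l, [/\ rng L l = v, deg L l = deg G g & pp l = g].
Proof.
move=> [_ _ _ _ pp_deg] lift v g rg.
have [l [rl pl]] := lift v g rg.
by exists l; rewrite -pl pp_deg.
Qed.

Lemma cofinal_image :
  surjective_morphism pv pp -> r_path_lifting pv pp ->
  cofinal L -> cofinal G.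
Proof.
move=> pp_surj lift cofL v w.
have [[pp_rng pp_src _ _ _] _] := pp_surj.
have [v' <-] := surjective_morphism_vert pp_surj v.
have [w' <-] := surjective_morphism_vert pp_surj w.
have [N cofN] := cofL v' w'.
exists N => a ra da.
have [a' [ra' da' pa']] := r_path_lifting_deg pp_surj.1 lift w' a ra.
have [l [rl sl]] := cofN a' ra' (etrans da' da).
by exists (pp l); rewrite pp_rng pp_src rl sl -pp_src pa'.
Qed.

End Morphism.

Theorem theorem4p7 (k : nat) (L G : kgraph k)
    (pv : kvert L -> kvert G) (pp : kpath L -> kpath G) :
  row_finite L -> row_finite G ->
  surjective_morphism pv pp -> r_path_lifting pv pp ->
  cofinal L -> cofinal G.
Proof. by move=> _ _; exact: cofinal_image. Qed.
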